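(* Let $\hat{\mathcal D}$ be a marked DAG over $X$, $\kappa>0$, $q\in\mathcal Q_{\mathcal D}$, $c\in\mathbb R_+^X$, $p=\mathcal A(q,c)$ and $P=\Lambda(p)$. Then for every unit flow $F\in\mathcal F_{\mathcal D}$, $$\mathbb D(F\,\|\,p)-\mathbb D(F\,\|\,q)\le\sum_{x\in X}c_x(F_x-P_x).$$
   Context: Let $X$ be a finite set. A DAG over $X$ is a finite directed acyclic graph $\mathcal D=(V,A)$ with $X\subseteq V$, a single source $r$, whose set of sinks is exactly $X$. A flow is $F\in\mathbb R_+^A$ with $\sum_{v:uv\in A}F_{uv}=\sum_{v:vu\in A}F_{vu}$ for $u\in V\setminus(X\cup\{r\})$; $F_u:=\sum_{v:uv\in A}F_{uv}$ for $u\notin X$, $F_x:=\sum_{u:ux\in A}F_{ux}$ for $x\in X$; unit flows have $F_r=1$ and form $\mathcal F_{\mathcal D}$. A marked DAG is $(\mathcal D,\omega,\theta)$ with $\omega\in\mathbb R_{>0}^A$, $\omega_{uv}>\omega_{vw}$ whenever $uv,vw\in A$, and $\theta\in\mathbb R_{>0}^A$ with $\sum_{v:uv\in A}\theta_{uv}=1$ for $u\in V\setminus X$. Put $\eta_{uv}:=1+\log(1/\theta_{uv})$, $\delta_{uv}:=\theta_{uv}/\eta_{uv}$. $\mathcal Q_{\mathcal D}:=\{p\in\mathbb R_+^A:\sum_{v:uv\in A}p_{uv}=1\ \forall u\in V\setminus X\}$; $q^{(u)}:=(q_{uv})_{v:uv\in A}$; $\mathcal Q^{(u)}$ is the probability simplex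 on $\{v:uv\in A\}$; $\mathbb D^{(u)}(p\|p'):=\frac1\kappa\sum_{v:uv\in A}\frac{\omega_{uv}}{\eta_{uv}}\big[(p_v+\delta_{uv})\log\frac{p_v+\delta_{uv}}{p'_v+\delta_{uv}}+p'_v-p_v\big]$. The step map $\mathcal A(q,c)$ outputs $p\in\mathcal Q_{\mathcal D}$: set $\hat c_x:=c_x$ for $x\in X$; process $u\in V\setminus X$ so that each vertex comes after all its out-neighbours, setting $p^{(u)}:=\arg\min_{p'\in\mathcal Q^{(u)}}\{\mathbb D^{(u)}(p'\|q^{(u)})+\sum_vp'_v\hat c_v\}$ and $\hat c_u:=\sum_vp^{(u)}_v\hat c_v$. $\Lambda(q)$ is the unique unit flow $F$ with $F_{uv}=F_uq_{uv}$ for all $uv\in A$. Global divergence: for $F\in\mathcal F_{\mathcal D}$, $q\in\mathcal Q_{\mathcal D}$, $\mathbb D(F\|q):=\frac1\kappa\sum_{uv\in A}\frac{\omega_{uv}}{\eta_{uv}}\big[(F_{uv}+F_u\delta_{uv})\log\frac{F_{uv}/F_u+\delta_{uv}}{q_{uv}+\delta_{uv}}+F_uq_{uv}-F_{uv}\big]$, with terms having $F_u=0$ interpreted as $0$. *)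

From HB Require Import structures.
From mathcomp Require Import all_boot all_order all_algebra.
From mathcomp Require Import reals exp.
Set Implicit Arguments. Unset Strict Implicit. Unset Printing Implicit Defensive.
Import Order.TTheory GRing.Theory Num.Theory.
Local Open Scope ring_scope.

(* A finite digraph on the finite vertex type V is given by its arc relation
   [arc]; arc-indexed vectors are functions V -> V -> R (only values on arcs
   matter). *)
Section Defs.
Context {R : realType} {V : finType}.
Variable arc : rel V.

Definition outsum (f : V -> V -> R) (u : V) : R := \sum_(v | arc u v) f u v.
Definition insum (f : V -> V -> R) (u : V) : R := \sum_(w | arc w u) f w u.

Definition node_val (X : {set V}) (f : V -> V -> R) (u : V) : R :=
  if u \in X then insum f u else outsum f u.

Definition is_DAG_over (X : {set V}) (r : V) : Prop :=
  [/\ (forall u v, arc u v -> ~~ connect arc v u),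
      (forall v, (v \in X) = ~~ [exists w, arc v w])
    & (forall v, (~~ [exists w, arc w v]) = (v == r))].

Definition is_flow (X : {set V}) (r : V) (F : V -> V -> R) : Prop :=
  (forall u v, arc u v -> 0 <= F u v) /\
  (forall u, u \notin X -> u != r -> outsum F u = insum F u).

Definition is_unit_flow (X : {set V}) (r : V) (F : V -> V -> R) : Prop :=
  is_flow X r F /\ node_val X F r = 1.

Definition is_marking (X : {set V}) (omega theta : V -> V -> R) : Prop :=
  [/\ (forall u v, arc u v -> 0 < omega u v),
      (forall u v w, arc u v -> arc v w -> omega v w < omega u v),
      (forall u v, arc u v -> 0 < theta u v)
    & (forall u, u \notin X -> outsum theta u = 1)].

Definition eta (theta : V -> V -> R) (u v : V) : R := 1 + ln (1 / theta u v).
Definition delta (theta : V -> V -> R) (u v : V) : R := theta u v / eta theta u v.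

Definition in_Q (X : {set V}) (p : V -> V -> R) : Prop :=
  (forall u v, arc u v -> 0 <= p u v) /\
  (forall u, u \notin X -> outsum p u = 1).

Definition in_simplex (u : V) (p' : V -> R) : Prop :=
  (forall v, arc u v -> 0 <= p' v) /\ \sum_(v | arc u v) p' v = 1.

Definition local_div (kappa : R) (omega theta : V -> V -> R) (u : V)
    (p' q' : V -> R) : R :=
  kappa^-1 * \sum_(v | arc u v) (omega u v / eta theta u v) *
    ((p' v + delta theta u v) *
       ln ((p' v + delta theta u v) / (q' v + delta theta u v))
     + q' v - p' v).

(* p = A(q, c): p is in Q_D, and together with the auxiliary costs chat it
   satisfies the defining equations of the step map: chat_x = c_x on X, and
   for u notin X, p^(u) is the minimiser over Q^(u) of
   D^(u)(. || q^(u)) + sum_v p'_v chat_v, and chat_u = sum_v p_uv chat_v. *)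
Definition step_output (X : {set V}) (kappa : R) (omega theta : V -> V -> R)
    (q : V -> V -> R) (c : V -> R) (p : V -> V -> R) : Prop :=
  in_Q X p /\
  exists chat : V -> R,
    [/\ (forall x, x \in X -> chat x = c x),
        (forall u, u \notin X -> chat u = \sum_(v | arc u v) p u v * chat v)
      & (forall u, u \notin X -> forall p' : V -> R, in_simplex u p' ->
           local_div kappa omega theta u (p u) (q u)
             + \sum_(v | arc u v) p u v * chat v
           <= local_div kappa omega theta u p' (q u)
             + \sum_(v | arc u v) p' v * chat v)].

Definition is_Lambda (X : {set V}) (r : V) (p P : V -> V -> R) : Prop :=
  is_unit_flow X r P /\
  (forall u v, arc u v -> P u v = node_val X P u * p u v).

Definition global_div (X : {set V}) (kappa : R) (omega theta : V -> V -> R)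
    (F q : V -> V -> R) : R :=
  kappa^-1 * \sum_(u : V) \sum_(v | arc u v)
    (if node_val X F u == 0 then 0 else
       (omega u v / eta theta u v) *
       ((F u v + node_val X F u * delta theta u v) *
          ln ((F u v / node_val X F u + delta theta u v)
              / (q u v + delta theta u v))
        + node_val X F u * q u v - F u v)).

End Defs.

From Pilot Require Import Defs.
From HB Require Import structures.
From mathcomp Require Import all_boot all_order all_algebra.
From mathcomp Require Import reals exp.
From mathcomp Require Import ring lra.
Import Order.TTheory GRing.Theory Num.Theory.
Local Open Scope ring_scope.

(* At every vertex u outside X the step map performs a mirror step for a
   weighted sum of shifted Kullback-Leibler terms over the simplex, so p^(u)
   satisfies the three-point inequality
     D(f || p) + D(p || q) <= D(f || q) + <f - p, chat>
   for every f in the simplex; it follows from optimality of p against the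
   points of the segment from p to f, up to an error O(t) that vanishes as
   t -> 0.  Taking f = F_u. / F_u and weighting by F_u bounds
   D(F || p) - D(F || q) by the potential gain sum_uv F_uv (chat_v - chat_u),
   which for a unit flow telescopes to sum_x chat_x F_x - chat_r.  For P the
   potential gain vanishes, because chat_u is the p-average of the chat_v;
   subtracting the two telescoped sums gives the bound, as chat = c on X. *)

Section ShiftedKL.
Context {R : realType}.
Implicit Types d t w x y : R.

(* The Bregman divergence of x |-> (x + d) ln (x + d) - x. *)
Definition shifted_kl d x y : R := (x + d) * ln ((x + d) / (y + d)) + y - x.

Lemma ln_le_subr1 y : 0 < y -> ln y <= y - 1.
Proof.
move=> y_gt0; have := @le_ln1Dx R (y - 1); rewrite addrCA subrr addr0; apply.
by rewrite ltrBrDl subrr.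
Qed.

Lemma shifted_kl_ge0 d x y : 0 < x + d -> 0 < y + d -> 0 <= shifted_kl d x y.
Proof.
move=> xd_gt0 yd_gt0; rewrite /shifted_kl.
have lnV : ln ((x + d) / (y + d)) = - ln ((y + d) / (x + d)).
  by rewrite !ln_div ?posrE // opprB.
have := ler_wpM2l (ltW xd_gt0) (ln_le_subr1 _ (divr_gt0 yd_gt0 xd_gt0)).
have -> : (x + d) * ((y + d) / (x + d) - 1) = y - x by field; rewrite gt_eqF.
rewrite lnV; lra.
Qed.

Lemma shifted_kl_mix d x y w t : 0 < x + d -> 0 < y + d -> 0 < w + d ->
    0 < x + t * (y - x) + d ->
  shifted_kl d (x + t * (y - x)) w
  = (1 - t) * shifted_kl d x w + t * shifted_kl d y w
    - (1 - t) * shifted_kl d x (x + t * (y - x))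
    - t * shifted_kl d y (x + t * (y - x)).
Proof. by move=> *; rewrite /shifted_kl !ln_div ?posrE //; ring. Qed.

Lemma shifted_kl_le_mix d x y t : 0 < x + d -> 0 < y + d ->
    0 < x + t * (y - x) + d ->
  shifted_kl d y x
  <= shifted_kl d y (x + t * (y - x)) + t * ((y - x) ^+ 2 / (x + d)).
Proof.
move=> xd_gt0 yd_gt0 zd_gt0; rewrite /shifted_kl !ln_div ?posrE //.
have := ln_le_subr1 _ (divr_gt0 zd_gt0 xd_gt0); rewrite ln_div ?posrE //.
move=> /(ler_wpM2l (ltW yd_gt0)).
have -> : (y + d) * ((x + t * (y - x) + d) / (x + d) - 1)
  = t * (y - x) + t * ((y - x) ^+ 2 / (x + d)) by field; rewrite gt_eqF.
lra.
Qed.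

Lemma ler_of_forall_lerD_scale (a b K : R) : 0 <= K ->
  (forall t, 0 < t -> t <= 1 -> a <= b + t * K) -> a <= b.
Proof.
move=> K_ge0 ab; apply/ler_addgt0Pr => e e_gt0.
have eK_gt0 : 0 < e + K by lra.
apply: (le_trans (ab (e / (e + K)) _ _)); rewrite ?divr_gt0 ?ler_pdivrMr //.
  by rewrite mul1r lerDl.
by rewrite lerD2l mulrAC ler_pdivrMr //; nra.
Qed.
End ShiftedKL.

Definition weighted_kl {R : realType} {V : finType} (S : pred V)
    (w d x y : V -> R) : R :=
  \sum_(v | S v) w v * shifted_kl (d v) (x v) (y v).

Section WeightedKL.
Context {R : realType} {V : finType} {S : pred V} {w d : V -> R}.
Hypotheses (w_gt0 : forall v, S v -> 0 < w v) (d_gt0 : forall v, S v -> 0 < d v).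
Implicit Types (t : R) (x y z ch : V -> R).
Local Notation wkl := (weighted_kl S w d).

Let nonneg x := forall v, S v -> 0 <= x v.
Let mix t x y v := x v + t * (y v - x v).

Let shift_gt0 {x v} : nonneg x -> S v -> 0 < x v + d v.
Proof. by move=> x_ge0 Sv; have := x_ge0 v Sv; have := d_gt0 v Sv; lra. Qed.

Let mix_ge0 {t x y} : 0 <= t <= 1 -> nonneg x -> nonneg y -> nonneg (mix t x y).
Proof.
move=> /andP[t_ge0 t_le1] x_ge0 y_ge0 v Sv; rewrite /mix.
have := mulr_ge0 t_ge0 (y_ge0 v Sv).
have : 0 <= (1 - t) * x v by rewrite mulr_ge0 ?subr_ge0 ?x_ge0.
lra.
Qed.

Lemma weighted_kl_ge0 {x y} : nonneg x -> nonneg y -> 0 <= wkl x y.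
Proof.
move=> x_ge0 y_ge0; apply: sumr_ge0 => v Sv.
rewrite mulr_ge0 ?shifted_kl_ge0 ?shift_gt0 //; exact: ltW (w_gt0 v Sv).
Qed.

Lemma weighted_kl_mix {t x y z} : 0 <= t <= 1 -> nonneg x -> nonneg y -> nonneg z ->
  wkl (mix t x y) z = (1 - t) * wkl x z + t * wkl y z
    - (1 - t) * wkl x (mix t x y) - t * wkl y (mix t x y).
Proof.
move=> t01 x_ge0 y_ge0 z_ge0; rewrite /weighted_kl !mulr_sumr -big_split -!sumrB /=.
apply: eq_bigr => v Sv.
rewrite shifted_kl_mix ?shift_gt0 //; first ring.
by have := mix_ge0 t01 x_ge0 y_ge0 v Sv; have := d_gt0 v Sv; rewrite /mix; lra.
Qed.

Lemma weighted_kl_le_mix {t x y} : 0 <= t <= 1 -> nonneg x -> nonneg y ->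
  wkl y x <= wkl y (mix t x y)
             + t * \sum_(v | S v) w v * ((y v - x v) ^+ 2 / (x v + d v)).
Proof.
move=> t01 x_ge0 y_ge0; rewrite /weighted_kl mulr_sumr -big_split /=.
apply: ler_sum => v Sv; rewrite mulrCA -mulrDr ler_wpM2l ?(ltW (w_gt0 v Sv)) //.
apply: shifted_kl_le_mix; rewrite ?shift_gt0 //.
by have := mix_ge0 t01 x_ge0 y_ge0 v Sv; have := d_gt0 v Sv; rewrite /mix; lra.
Qed.

Lemma weighted_kl_three_point ch {q p f} :
    nonneg q -> nonneg p -> nonneg f ->
    \sum_(v | S v) p v = 1 -> \sum_(v | S v) f v = 1 ->
    (forall y, nonneg y -> \sum_(v | S v) y v = 1 ->
       wkl p q + \sum_(v | S v) p v * ch v <= wkl y q + \sum_(v | S v) y v * ch v) ->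
  wkl f p + wkl p q
  <= wkl f q + \sum_(v | S v) f v * ch v - \sum_(v | S v) p v * ch v.
Proof.
move=> q_ge0 p_ge0 f_ge0 p1 f1 p_min.
pose obj y := wkl y q + \sum_(v | S v) y v * ch v.
apply: (ler_of_forall_lerD_scale _ _
  (\sum_(v | S v) w v * ((f v - p v) ^+ 2 / (p v + d v)))).
  apply: sumr_ge0 => v Sv; rewrite mulr_ge0 ?(ltW (w_gt0 v Sv)) //.
  by rewrite divr_ge0 ?sqr_ge0 ?(ltW (shift_gt0 p_ge0 Sv)).
(* Optimality of p against mix t p f and the mix identity give
   wkl f (mix t p f) <= obj f - obj p; moving the base point back to p costs
   at most t times the constant above. *)
move=> t t_gt0 t_le1; have t01 : 0 <= t <= 1 by rewrite ltW.
have mix1 : \sum_(v | S v) mix t p f v = 1.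
  by rewrite /mix big_split /= -mulr_sumr sumrB p1 f1 subrr mulr0 addr0.
have obj_mix : obj (mix t p f) = (1 - t) * obj p + t * obj f
    - (1 - t) * wkl p (mix t p f) - t * wkl f (mix t p f).
  rewrite /obj weighted_kl_mix //.
  have -> : \sum_(v | S v) mix t p f v * ch v
      = (1 - t) * \sum_(v | S v) p v * ch v + t * \sum_(v | S v) f v * ch v.
    by rewrite !mulr_sumr -big_split; apply: eq_bigr => v _; rewrite /mix /=; ring.
  ring.
have := p_min _ (mix_ge0 t01 p_ge0 f_ge0) mix1.
rewrite -/(obj p) -/(obj _) obj_mix.
have : 0 <= (1 - t) * wkl p (mix t p f).
  by rewrite mulr_ge0 ?subr_ge0 // weighted_kl_ge0 //; apply: mix_ge0.
have := weighted_kl_le_mix t01 p_ge0 f_ge0.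
rewrite /obj; nra.
Qed.
End WeightedKL.

Section PotentialGain.
Context {R : realType} {V : finType}.
Variable arc : rel V.
Implicit Types (G : V -> V -> R) (g : V -> R).

Definition potential_gain G g : R :=
  \sum_u \sum_(v | arc u v) G u v * (g v - g u).

Lemma potential_gainE G g :
  potential_gain G g = \sum_u g u * (insum arc G u - outsum arc G u).
Proof.
have in_exchange :
    \sum_u \sum_(v | arc u v) G u v * g v = \sum_v g v * insum arc G v.
  rewrite (exchange_big_dep xpredT) //=; apply: eq_bigr => v _.
  by rewrite /insum mulr_sumr; apply: eq_bigr => u _; rewrite mulrC.
rewrite /potential_gain (eq_bigr (fun u =>
    \sum_(v | arc u v) G u v * g v - g u * outsum arc G u)) => [|u _].
  by rewrite sumrB in_exchange -sumrB; apply: eq_bigr => u _; rewrite mulrBr.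
rewrite /outsum mulr_sumr -sumrB; apply: eq_bigr => v _.
by rewrite mulrBr [g u * _]mulrC.
Qed.

End PotentialGain.

Section DAG.
Context {R : realType} {V : finType} {arc : rel V} {X : {set V}} {r : V}.
Hypothesis dag : is_DAG_over arc X r.
Implicit Types (G : V -> V -> R) (g : V -> R).

Lemma sink_no_arc x v : x \in X -> ~~ arc x v.
Proof.
case: dag => _ sinks _; rewrite sinks => /existsPn; exact.
Qed.

Lemma source_no_arc u : ~~ arc u r.
Proof.
case: dag => _ _ /(_ r); rewrite eqxx => /existsPn; exact.
Qed.

Lemma arc_source_notin {u v} : arc u v -> u \notin X.
Proof. by apply: contraTN => /sink_no_arc ->. Qed.

Lemma unit_flow_potential_gain {G g} : is_unit_flow arc X r G ->
  potential_gain arc G g = \sum_(x in X) g x * node_val arc X G x - g r.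
Proof.
move=> [[_ conserve] Gr1].
have insum_r : insum arc G r = 0.
  by rewrite /insum big_pred0 // => u; apply/negbTE/source_no_arc.
have r_notin : r \notin X.
  apply/negP => rX; move: Gr1; rewrite /node_val rX insum_r => /eqP.
  by rewrite eq_sym oner_eq0.
rewrite potential_gainE (bigID (mem X)) /=; congr (_ + _).
  apply: eq_bigr => x xX; rewrite /node_val xX /outsum big_pred0 ?subr0 //.
  by move=> v; apply/negbTE/sink_no_arc.
rewrite (bigD1 r) //= big1 ?addr0 => [|u /andP[uX ur]]; last first.
  by rewrite conserve ?subrr ?mulr0.
by move: Gr1; rewrite /node_val (negbTE r_notin) insum_r => ->; rewrite sub0r mulrN1.
Qed.

End DAG.

Lemma local_divE {R : realType} {V : finType} (arc : rel V) (kappa : R)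
    (omega theta : V -> V -> R) u (x y : V -> R) :
  local_div arc kappa omega theta u x y
  = weighted_kl (arc u) (fun v => kappa^-1 * (omega u v / Defs.eta theta u v))
        (delta theta u) x y.
Proof.
by rewrite /local_div /weighted_kl mulr_sumr; apply: eq_bigr => v _; rewrite mulrA.
Qed.

Lemma global_divE {R : realType} {V : finType} (arc : rel V) (X : {set V})
    (kappa : R) (omega theta F q : V -> V -> R) :
  global_div arc X kappa omega theta F q
  = \sum_u node_val arc X F u *
      local_div arc kappa omega theta u (fun v => F u v / node_val arc X F u) (q u).
Proof.
rewrite /global_div /local_div mulr_sumr; apply: eq_bigr => u _.
have [->|Fu_neq0] := eqVneq (node_val arc X F u) 0.
  by rewrite mul0r big1 ?mulr0.
rewrite [RHS]mulrCA !mulr_sumr; apply: eq_bigr => v _; congr (_ * _).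
set a := omega u v / _; set L := ln _; set dl := delta theta u v.
by field.
Qed.

Section MirrorStep.
Context {R : realType} {V : finType} {arc : rel V} {X : {set V}} {r : V}
  {omega theta : V -> V -> R} {kappa : R} {q p : V -> V -> R} {ch : V -> R}.
Hypotheses (dag : is_DAG_over arc X r) (marking : is_marking arc X omega theta)
  (kappa_gt0 : 0 < kappa) (q_in_Q : in_Q arc X q) (p_in_Q : in_Q arc X p).
Hypothesis ch_mean :
  forall u, u \notin X -> ch u = \sum_(v | arc u v) p u v * ch v.
Hypothesis p_min :
  forall u, u \notin X -> forall p' : V -> R, in_simplex arc u p' ->
  local_div arc kappa omega theta u (p u) (q u) + \sum_(v | arc u v) p u v * ch v
  <= local_div arc kappa omega theta u p' (q u) + \sum_(v | arc u v) p' v * ch v.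

Lemma theta_le1 u v : arc u v -> theta u v <= 1.
Proof.
case: marking => _ _ theta_gt0 theta_sum a_uv.
rewrite -(theta_sum u (arc_source_notin dag a_uv)) /outsum (bigD1 v) //= lerDl.
by apply: sumr_ge0 => w /andP[a_uw _]; exact: ltW (theta_gt0 u w a_uw).
Qed.

Lemma eta_gt0 u v : arc u v -> 0 < Defs.eta theta u v.
Proof.
case: marking => _ _ theta_gt0 _ a_uv.
rewrite /Defs.eta (lt_le_trans ltr01) // lerDl.
by apply: ln_ge0; rewrite div1r invf_ge1 ?theta_le1 ?theta_gt0.
Qed.

Lemma delta_gt0 u v : arc u v -> 0 < delta theta u v.
Proof.
move=> a_uv; case: marking => _ _ theta_gt0 _.
by rewrite divr_gt0 ?theta_gt0 ?eta_gt0.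
Qed.

Lemma local_div_three_point {u f} : u \notin X -> in_simplex arc u f ->
  local_div arc kappa omega theta u f (p u) - local_div arc kappa omega theta u f (q u)
  <= \sum_(v | arc u v) f v * (ch v - ch u).
Proof.
move=> uX [f_ge0 f1].
case: q_in_Q p_in_Q marking => [q_ge0 _] [p_ge0 p1] [omega_gt0 _ _ _].
have w_gt0 v : arc u v -> 0 < kappa^-1 * (omega u v / Defs.eta theta u v).
  by move=> a_uv; rewrite !mulr_gt0 ?invr_gt0 ?omega_gt0 ?eta_gt0.
set D := local_div arc kappa omega theta u.
have three_point : D f (p u) + D (p u) (q u)
    <= D f (q u) + \sum_(v | arc u v) f v * ch v - ch u.
  rewrite (ch_mean u uX) /D !local_divE.
  apply: (weighted_kl_three_point w_gt0 (delta_gt0 u) ch (q_ge0 u) (p_ge0 u) f_ge0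
           (p1 u uX) f1).
  by move=> y y_ge0 y1; rewrite -!local_divE; apply: p_min.
have := weighted_kl_ge0 w_gt0 (delta_gt0 u) (p_ge0 u) (q_ge0 u).
rewrite -local_divE -/(D _ _).
have -> : \sum_(v | arc u v) f v * (ch v - ch u)
    = \sum_(v | arc u v) f v * ch v - ch u.
  rewrite -[ch u in RHS]mul1r -f1 mulr_suml -sumrB.
  by apply: eq_bigr => v _; rewrite mulrBr.
lra.
Qed.

Lemma global_div_sub_le F : (forall u v, arc u v -> 0 <= F u v) ->
  global_div arc X kappa omega theta F p - global_div arc X kappa omega theta F q
  <= potential_gain arc F ch.
Proof.
move=> F_ge0; rewrite !global_divE -sumrB; apply: ler_sum => u _; rewrite -mulrBr.
have [uX|uX] := boolP (u \in X).
  rewrite /local_div !big_pred0 ?mulr0 ?subrr ?mulr0 //;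
  by move=> v; apply/negbTE/(sink_no_arc dag).
have Fu_out : node_val arc X F u = outsum arc F u by rewrite /node_val (negbTE uX).
have Fu_ge0 : 0 <= node_val arc X F u.
  by rewrite Fu_out; apply: sumr_ge0 => v /F_ge0.
have [Fu0|Fu_neq0] := eqVneq (node_val arc X F u) 0.
  rewrite Fu0 mul0r big1 // => v a_uv.
  by rewrite (psumr_eq0P (F_ge0 u) (etrans (esym Fu_out) Fu0) a_uv) mul0r.
have f_simplex : in_simplex arc u (fun v => F u v / node_val arc X F u).
  split=> [v a_uv|]; first by rewrite divr_ge0 ?F_ge0.
  by rewrite -mulr_suml -/(outsum arc F u) -Fu_out divff.
apply: le_trans (ler_wpM2l Fu_ge0 (local_div_three_point uX f_simplex)) _.
rewrite mulr_sumr; apply: ler_sum => v _.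
by rewrite mulrA mulrCA divff // mulr1 lexx.
Qed.

Lemma Lambda_potential_gain {P} :
    (forall u v, arc u v -> P u v = node_val arc X P u * p u v) ->
  potential_gain arc P ch = 0.
Proof.
move=> P_arc; apply: big1 => u _.
have [uX|uX] := boolP (u \in X).
  by rewrite big_pred0 // => v; apply/negbTE/(sink_no_arc dag).
case: p_in_Q => _ /(_ u uX) p1.
rewrite (eq_bigr (fun v => node_val arc X P u * (p u v * ch v - p u v * ch u))).
  rewrite -mulr_sumr sumrB -mulr_suml -/(outsum arc p u) p1 mul1r.
  by rewrite -ch_mean // subrr mulr0.
by move=> v a_uv; rewrite P_arc // -mulrA mulrBr [p u v * ch u]mulrC.
Qed.

End MirrorStep.

Theorem lemma4p6 (R : realType) (V : finType) (arc : rel V) (X : {set V})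
    (r : V) (omega theta : V -> V -> R) (kappa : R)
    (q : V -> V -> R) (c : V -> R) (p P : V -> V -> R) :
  is_DAG_over arc X r ->
  is_marking arc X omega theta ->
  0 < kappa ->
  in_Q arc X q ->
  (forall x, x \in X -> 0 <= c x) ->
  step_output arc X kappa omega theta q c p ->
  is_Lambda arc X r p P ->
  forall F : V -> V -> R, is_unit_flow arc X r F ->
    global_div arc X kappa omega theta F p - global_div arc X kappa omega theta F q
    <= \sum_(x in X) c x * (node_val arc X F x - node_val arc X P x).
Proof.
move=> dag marking kappa_gt0 q_in_Q _ [p_in_Q [ch [ch_X ch_mean p_min]]]
  [P_unit P_arc] F F_unit.
have -> : \sum_(x in X) c x * (node_val arc X F x - node_val arc X P x)
    = potential_gain arc F ch - potential_gain arc P ch.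
  rewrite (unit_flow_potential_gain dag F_unit) (unit_flow_potential_gain dag P_unit).
  rewrite opprB addrA subrK -sumrB.
  by apply: eq_bigr => x xX; rewrite ch_X // mulrBr.
rewrite (Lambda_potential_gain dag p_in_Q ch_mean P_arc) subr0.
case: F_unit => [[F_ge0 _] _].
exact: global_div_sub_le dag marking kappa_gt0 q_in_Q p_in_Q ch_mean p_min F F_ge0.
Qed.
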